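(* Let $p\in\{q,q^{-1}\}$. Then the degree-zero part $\mathfrak{M}_{p,q}[D^{-1}]_0$ of the localization of $\mathfrak{M}_{p,q}$ at $D$ is isomorphic to $\mathfrak{M}^{\rm I}_q$ via $x_{rs'}\mapsto z_{rs'}/D$, and the degree-zero part $\mathfrak{M}_{p,q}[D'^{-1}]_0$ of the localization at $D'$ is isomorphic to $\mathfrak{M}^{\rm J}_q$ via $y_{rs'}\mapsto z_{rs'}/D'$ ($r,s=1,2$); in particular this holds independently of the choice $p=q$ or $p=q^{-1}$.
   Context: $q$ is a formal parameter. $\mathfrak{M}_{p,q}$ (the quantum compactified complexified Minkowski space) is the graded associative $\mathbb{C}$-algebra generated in degree one by $z_{11'},z_{12'},z_{21'},z_{22'},D,D'$ with relations: $z_{11'}z_{12'}=z_{12'}z_{11'}$, $z_{11'}z_{21'}=z_{21'}z_{11'}$, $z_{12'}z_{22'}=z_{22'}z_{12'}$, $z_{21'}z_{22'}=z_{22'}z_{21'}$, $z_{12'}z_{21'}=z_{21'}z_{12'}$; $q^{-1}(z_{11'}z_{22'}-z_{12'}z_{21'})=q(z_{22'}z_{11'}-z_{12'}z_{21'})$; $Dz_{11'}=pq^{-1}z_{11'}D$, $Dz_{12'}=pq^{-1}z_{12'}D$, $Dz_{21'}=pqz_{21'}D$, $Dz_{22'}=pqz_{22'}D$; $D'z_{11'}=p^{-1}q^{-1}z_{11'}D'$, $D'z_{12'}=p^{-1}qz_{12'}D'$, $D'z_{21'}=p^{-1}q^{-1}z_{21'}D'$, $D'z_{22'}=p^{-1}qz_{22'}D'$;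 $p^{-1}DD'=pD'D$; $q^{-1}(z_{11'}z_{22'}-z_{12'}z_{21'})=p^{-1}DD'$. The notation $z_{rs'}/D$ means $c_{rs'}^{-1/2}D^{-1}z_{rs'}=c_{rs'}^{1/2}z_{rs'}D^{-1}$ where $D^{-1}z_{rs'}=c_{rs'}z_{rs'}D^{-1}$ with $c_{rs'}$ a constant, and similarly for $z_{rs'}/D'$. $\mathfrak{M}^{\rm I}_q$ is the algebra generated by $x_{11'},x_{12'},x_{21'},x_{22'}$ with relations $x_{11'}x_{12'}=x_{12'}x_{11'}$, $x_{21'}x_{22'}=x_{22'}x_{21'}$, $[x_{11'},x_{22'}]+[x_{21'},x_{12'}]=0$, $x_{11'}x_{21'}=q^{-2}x_{21'}x_{11'}$, $x_{12'}x_{22'}=q^{-2}x_{22'}x_{12'}$, $x_{21'}x_{12'}=q^2x_{12'}x_{21'}$. $\mathfrak{M}^{\rm J}_q$ is the algebra generated by $y_{11'},y_{12'},y_{21'},y_{22'}$ with relations $y_{11'}y_{21'}=y_{21'}y_{11'}$, $y_{12'}y_{22'}=y_{22'}y_{12'}$, $[y_{11'},y_{22'}]+[y_{12'},y_{21'}]=0$, $y_{11'}y_{12'}=q^{-2}y_{12'}y_{11'}$, $y_{21'}y_{22'}=q^{-2}y_{22'}y_{21'}$, $y_{12'}y_{21'}=q^2y_{21'}y_{12'}$. *)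

From HB Require Import structures.
From mathcomp Require Import all_boot all_order all_algebra fraction.
From mathcomp Require Import complex.
From mathcomp Require Import Rstruct.
Set Implicit Arguments.
Unset Strict Implicit.
Unset Printing Implicit Defensive.
Import GRing.Theory.
Local Open Scope ring_scope.

Definition Cx := (Rdefinitions.R)[i].
Definition Kq := {fraction {poly Cx}}.
Definition qpar : Kq := FracField.tofrac ('X : {poly Cx}).

Definition i1 : 'I_2 := @ord0 1.
Definition i2 : 'I_2 := @ord_max 1.

Section Defs.
Variable K : fieldType.

Definition is_alg_hom (A B : algType K) (f : A -> B) : Prop :=
  [/\ (forall x y, f (x + y) = f x + f y),
      (forall x y, f (x * y) = f x * f y),
      f 1 = 1 &
      (forall (k : K) x, f (k *: x) = k *: f x)].

Definition MRel (p q : K) (B : algType K) (z : 'I_2 -> 'I_2 -> B) (D D' : B)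
  : Prop :=
  [/\ [/\ z i1 i1 * z i1 i2 = z i1 i2 * z i1 i1,
      z i1 i1 * z i2 i1 = z i2 i1 * z i1 i1,
      z i1 i2 * z i2 i2 = z i2 i2 * z i1 i2,
      z i2 i1 * z i2 i2 = z i2 i2 * z i2 i1 &
      z i1 i2 * z i2 i1 = z i2 i1 * z i1 i2],
      q^-1 *: (z i1 i1 * z i2 i2 - z i1 i2 * z i2 i1)
        = q *: (z i2 i2 * z i1 i1 - z i1 i2 * z i2 i1),
      [/\ D * z i1 i1 = (p * q^-1) *: (z i1 i1 * D),
          D * z i1 i2 = (p * q^-1) *: (z i1 i2 * D),
          D * z i2 i1 = (p * q) *: (z i2 i1 * D) &
          D * z i2 i2 = (p * q) *: (z i2 i2 * D)],
      [/\ D' * z i1 i1 = (p^-1 * q^-1) *: (z i1 i1 * D'),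
          D' * z i1 i2 = (p^-1 * q) *: (z i1 i2 * D'),
          D' * z i2 i1 = (p^-1 * q^-1) *: (z i2 i1 * D') &
          D' * z i2 i2 = (p^-1 * q) *: (z i2 i2 * D')] &
      p^-1 *: (D * D') = p *: (D' * D) /\
      q^-1 *: (z i1 i1 * z i2 i2 - z i1 i2 * z i2 i1) = p^-1 *: (D * D')].

Definition is_M_presentation (p q : K) (A : algType K)
  (z : 'I_2 -> 'I_2 -> A) (D D' : A) : Prop :=
  MRel p q z D D' /\
  forall (B : algType K) (zB : 'I_2 -> 'I_2 -> B) (DB D'B : B),
    MRel p q zB DB D'B ->
    (exists f : A -> B, is_alg_hom f /\
        (forall r s, f (z r s) = zB r s) /\ f D = DB /\ f D' = D'B) /\
    (forall f g : A -> B, is_alg_hom f -> is_alg_hom g ->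
        (forall r s, f (z r s) = g (z r s)) -> f D = g D -> f D' = g D' ->
        f =1 g).

Definition MIRel (q : K) (B : algType K) (x : 'I_2 -> 'I_2 -> B) : Prop :=
  [/\ x i1 i1 * x i1 i2 = x i1 i2 * x i1 i1 /\
      x i2 i1 * x i2 i2 = x i2 i2 * x i2 i1,
      (x i1 i1 * x i2 i2 - x i2 i2 * x i1 i1)
        + (x i2 i1 * x i1 i2 - x i1 i2 * x i2 i1) = 0,
      x i1 i1 * x i2 i1 = q ^- 2 *: (x i2 i1 * x i1 i1),
      x i1 i2 * x i2 i2 = q ^- 2 *: (x i2 i2 * x i1 i2) &
      x i2 i1 * x i1 i2 = q ^+ 2 *: (x i1 i2 * x i2 i1)].

Definition MJRel (q : K) (B : algType K) (y : 'I_2 -> 'I_2 -> B) : Prop :=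
  [/\ y i1 i1 * y i2 i1 = y i2 i1 * y i1 i1 /\
      y i1 i2 * y i2 i2 = y i2 i2 * y i1 i2,
      (y i1 i1 * y i2 i2 - y i2 i2 * y i1 i1)
        + (y i1 i2 * y i2 i1 - y i2 i1 * y i1 i2) = 0,
      y i1 i1 * y i1 i2 = q ^- 2 *: (y i1 i2 * y i1 i1),
      y i2 i1 * y i2 i2 = q ^- 2 *: (y i2 i2 * y i2 i1) &
      y i1 i2 * y i2 i1 = q ^+ 2 *: (y i2 i1 * y i1 i2)].

Definition is_presentation4
  (Rel : forall B : algType K, ('I_2 -> 'I_2 -> B) -> Prop)
  (A : algType K) (x : 'I_2 -> 'I_2 -> A) : Prop :=
  Rel A x /\
  forall (B : algType K) (xB : 'I_2 -> 'I_2 -> B), Rel B xB ->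
    (exists f : A -> B, is_alg_hom f /\ (forall r s, f (x r s) = xB r s)) /\
    (forall f g : A -> B, is_alg_hom f -> is_alg_hom g ->
        (forall r s, f (x r s) = g (x r s)) -> f =1 g).

Definition is_localization (A L : algType K) (d : A) (iota : A -> L)
  (dinv : L) : Prop :=
  [/\ is_alg_hom iota, iota d * dinv = 1, dinv * iota d = 1 &
  forall (B : algType K) (f : A -> B) (e : B),
    is_alg_hom f -> f d * e = 1 -> e * f d = 1 ->
    (exists g : L -> B, is_alg_hom g /\ forall a, g (iota a) = f a) /\
    (forall g h : L -> B, is_alg_hom g -> is_alg_hom h ->
        (forall a, g (iota a) = h (iota a)) -> g =1 h)].

(* M_{p,q} is generated in degree one by z_{rs'}, D, D'; the
   localization A[d^{-1}] is generated by the images of these (degree 1)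
   and by d^{-1} (degree -1). *)
Definition loc_gen (A L : algType K) (z : 'I_2 -> 'I_2 -> A) (D D' : A)
  (iota : A -> L) (dinv : L) (i : 'I_7) : L :=
  match val i with
  | 0 => iota (z i1 i1)
  | 1 => iota (z i1 i2)
  | 2 => iota (z i2 i1)
  | 3 => iota (z i2 i2)
  | 4 => iota D
  | 5 => iota D'
  | _ => dinv
  end.

Definition loc_wt (i : 'I_7) : int := if val i == 6 then -1 else 1.

Definition loc_deg0 (A L : algType K) (z : 'I_2 -> 'I_2 -> A) (D D' : A)
  (iota : A -> L) (dinv : L) (u : L) : Prop :=
  exists ws : seq (K * seq 'I_7),
    all (fun t => \sum_(i <- t.2) loc_wt i == 0) ws /\
    u = \sum_(t <- ws) t.1 *: \prod_(i <- t.2) loc_gen z D D' iota dinv i.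

End Defs.

(* The constants c_{rs'}^{1/2} (for D) and c'_{rs'}^{1/2} (for D'),
   where D^{-1} z_{rs'} = c_{rs'} z_{rs'} D^{-1}, so that
   z_{rs'}/D = c_{rs'}^{1/2} z_{rs'} D^{-1}.  From D z = a z D one gets
   c = a^{-1}; with p = q^{+-1} every c is an even power of q and we take
   the square root that is the corresponding power of q:
     p = q    : c = 1,1,q^-2,q^-2 ;  c' = q^2,1,q^2,1
     p = q^-1 : c = q^2,q^2,1,1   ;  c' = 1,q^-2,1,q^-2  (order 11,12,21,22) *)
Definition sqrtcD (p q : Kq) (r s : 'I_2) : Kq :=
  if p == q then (if r == i1 then 1 else q^-1)
  else (if r == i1 then q else 1).

Definition sqrtcD' (p q : Kq) (r s : 'I_2) : Kq :=
  if p == q then (if s == i1 then q else 1)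
  else (if s == i1 then 1 else q^-1).

(* Put Y_{rs'} = z_{rs'} D^{-1}.  Since D z_{rs'} = a_r z_{rs'} D for a scalar a_r
   depending only on the row, moving D^{-1} across z_{rs'} costs a_r^{-1}; so the
   Y_{rs'}, rescaled by any nonzero constants c_r, satisfy the relations of M^I_q,
   which gives f.  A degree-zero word in z_{rs'}, D, D', D^{-1} can be rearranged
   into a product of the Y_{rs'} and of D D^{-1} = 1 and
   D' D^{-1} = Y_{11'} Y_{22'} - Y_{12'} Y_{21'}, so f is onto the degree-zero part.
   For injectivity, let sigma be the automorphism of M^I_q scaling x_{rs'} by a_r.
   In the algebra of linear endomorphisms of M^I_q, the assignments D |-> sigma,
   z_{rs'} |-> x_{rs'} sigma / c_r and
   D' |-> (x_{11'} x_{22'} - x_{12'} x_{21'}) sigma / (c_1 c_2)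
   satisfy the relations of M_{p,q} with D invertible, so the localization maps
   there; composed with f this map is left multiplication, which is injective.  The statement for D' is the one for D after the symmetry
   z_{rs'} <-> z_{sr'}, D <-> D', p <-> p^{-1}, which exchanges M^I_q and M^J_q. *)

From HB Require Import structures.
From mathcomp Require Import all_boot all_order all_algebra fraction.
From mathcomp Require Import complex.
From mathcomp Require Import Rstruct.
From mathcomp Require Import boolp.
From mathcomp Require Import ring zify.
Import GRing.Theory.
Local Open Scope ring_scope.
Set Implicit Arguments.
Unset Strict Implicit.
Unset Printing Implicit Defensive.

Section AlgHom.
Variables (K : fieldType) (A B : algType K) (f : A -> B).
Hypothesis Hf : is_alg_hom f.

Lemma alg_homD x y : f (x + y) = f x + f y. Proof. by case: Hf. Qed.
Lemma alg_homM x y : f (x * y) = f x * f y. Proof. by case: Hf. Qed.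
Lemma alg_hom1 : f 1 = 1. Proof. by case: Hf. Qed.
Lemma alg_homZ k x : f (k *: x) = k *: f x. Proof. by case: Hf. Qed.
Lemma alg_hom0 : f 0 = 0. Proof. by rewrite -(scale0r 0) alg_homZ scale0r. Qed.
Lemma alg_homN x : f (- x) = - f x. Proof. by rewrite -scaleN1r alg_homZ scaleN1r. Qed.
Lemma alg_homB x y : f (x - y) = f x - f y. Proof. by rewrite alg_homD alg_homN. Qed.
Lemma alg_hom_linear : linear f.
Proof. by move=> k u v; rewrite alg_homD alg_homZ. Qed.

End AlgHom.

Lemma id_alg_hom (K : fieldType) (A : algType K) : is_alg_hom (@id A).
Proof. by []. Qed.

Lemma comp_alg_hom (K : fieldType) (A B C : algType K) (f : A -> B) (g : B -> C) :
  is_alg_hom f -> is_alg_hom g -> is_alg_hom (g \o f).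
Proof.
move=> Hf Hg; split=> [u v|u v||k u] /=.
- by rewrite (alg_homD Hf) (alg_homD Hg).
- by rewrite (alg_homM Hf) (alg_homM Hg).
- by rewrite (alg_hom1 Hf) (alg_hom1 Hg).
- by rewrite (alg_homZ Hf) (alg_homZ Hg).
Qed.

Lemma addr_subr_eq0 (V : zmodType) (a b c d : V) :
  ((a - b) + (c - d) == 0) = (a - d == b - c).
Proof. by rewrite addr_eq0 opprB !subr_eq addrAC -addrA addrC -[b - c + d]addrA addrC. Qed.

Lemma scalerMM (K : fieldType) (B : algType K) (a b : K) (u v : B) :
  (a *: u) * (b *: v) = (a * b) *: (u * v).
Proof. by rewrite -scalerAl -scalerAr scalerA. Qed.

Lemma inv_commute (K : fieldType) (L : algType K) (E Einv g : L) (a : K) :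
  E * Einv = 1 -> Einv * E = 1 -> a != 0 -> E * g = a *: (g * E) ->
  Einv * g = a^-1 *: (g * Einv).
Proof.
move=> E_Einv Einv_E a_neq0 Eg.
have gE : g * E = a^-1 *: (E * g) by rewrite Eg scalerA mulVf ?scale1r.
rewrite -[Einv * g]mulr1 -E_Einv mulrA -(mulrA Einv) gE -scalerAr -scalerAl.
by rewrite mulrA Einv_E mul1r scalerAl.
Qed.

Lemma exprZ_commute (K : fieldType) (L : algType K) (X g : L) (a : K) :
  X * g = a *: (g * X) -> forall k, X ^+ k * g = a ^+ k *: (g * X ^+ k).
Proof.
move=> Xg; elim=> [|k IHk]; first by rewrite !expr0 mul1r mulr1 scale1r.
by rewrite [in LHS]exprS -mulrA IHk -scalerAr mulrA Xg -scalerAl scalerA -mulrA -exprS -exprSr.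
Qed.

Section SubalgebraOfPresentation.
Variables (K : fieldType) (L : algType K) (P : {pred L}).
Hypothesis P_closed : subalg_closed P.

HB.instance Definition _ := GRing.isSubalgClosed.Build K L P (GRing.subalg_closed_semi P_closed).

Record subalg := Subalg { subalg_val :> L; subalg_valP : subalg_val \in P }.
HB.instance Definition _ := [isSub for subalg_val].
HB.instance Definition _ := [Choice of subalg by <:].
HB.instance Definition _ := [SubChoice_isSubAlgebra of subalg by <:].

Lemma subalg_val_hom : is_alg_hom subalg_val.
Proof. by split=> [u v|u v||k u]; rewrite ?rmorphD ?rmorphM ?rmorph1 ?linearZ. Qed.

Lemma presentation4_hom_subalg
    (Rel : forall B : algType K, ('I_2 -> 'I_2 -> B) -> Prop)
    (Rel_reflect : forall (B C : algType K) (h : B -> C) (xB : 'I_2 -> 'I_2 -> B),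
        is_alg_hom h -> injective h -> Rel C (fun r s => h (xB r s)) -> Rel B xB)
    (A : algType K) (x : 'I_2 -> 'I_2 -> A) (HA : is_presentation4 Rel x)
    (f : A -> L) (Hf : is_alg_hom f) (Rel_fx : Rel L (fun r s => f (x r s)))
    (Pfx : forall r s, f (x r s) \in P) :
  forall v, f v \in P.
Proof.
pose xP r s := Subalg (Pfx r s).
have [_ HU] := HA.
have [[g [Hg gx]] _] := HU _ xP (Rel_reflect _ _ _ xP subalg_val_hom val_inj Rel_fx).
have [_ uniq] := HU L _ Rel_fx.
have gf : subalg_val \o g =1 f.
  by apply: uniq => [||r s]; [exact: comp_alg_hom subalg_val_hom | exact: Hf | rewrite /= gx].
by move=> v; rewrite -gf; exact: subalg_valP.
Qed.

End SubalgebraOfPresentation.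

Section LinearEndomorphisms.
Variables (K : fieldType) (V : lalgType K).

Record lend := Lend { lend_fun :> V -> V; lend_linear : linear lend_fun }.

HB.instance Definition _ (f : lend) :=
  GRing.isLinear.Build K V V *:%R (lend_fun f) (lend_linear f).
HB.instance Definition _ := gen_eqMixin lend.
HB.instance Definition _ := gen_choiceMixin lend.

Lemma lendP (f g : lend) : f =1 g -> f = g.
Proof.
case: f g => f lf [g lg] /= /funext fg; subst g.
by congr Lend; exact: Prop_irrelevance.
Qed.

Definition lend_of (f : {linear V -> V}) := Lend (fun k => linearP f k).

Definition lend0 := lend_of (\0 : {linear V -> V}).
Definition lend1 := lend_of (idfun : {linear V -> V}).
Definition lend_add (f g : lend) := lend_of (f \+ g : {linear V -> V}).
Definition lend_opp (f : lend) := lend_of (\- f : {linear V -> V}).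
Definition lend_mul (f g : lend) := lend_of (f \o g : {linear V -> V}).
Definition lend_scale (k : K) (f : lend) := lend_of (k \*: f : {linear V -> V}).

Lemma lend_addA : associative lend_add.
Proof. by move=> f g h; apply: lendP => v /=; rewrite addrA. Qed.
Lemma lend_addC : commutative lend_add.
Proof. by move=> f g; apply: lendP => v /=; rewrite addrC. Qed.
Lemma lend_add0 : left_id lend0 lend_add.
Proof. by move=> f; apply: lendP => v /=; rewrite add0r. Qed.
Lemma lend_addN : left_inverse lend0 lend_opp lend_add.
Proof. by move=> f; apply: lendP => v /=; rewrite addNr. Qed.

HB.instance Definition _ :=
  GRing.isZmodule.Build lend lend_addA lend_addC lend_add0 lend_addN.

Lemma lend_mulA : associative lend_mul.
Proof. by move=> f g h; apply: lendP. Qed.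
Lemma lend_mul1 : left_id lend1 lend_mul.
Proof. by move=> f; apply: lendP. Qed.
Lemma lend_mulr1 : right_id lend1 lend_mul.
Proof. by move=> f; apply: lendP. Qed.
Lemma lend_mulDl : left_distributive lend_mul lend_add.
Proof. by move=> f g h; apply: lendP. Qed.
Lemma lend_mulDr : right_distributive lend_mul lend_add.
Proof. by move=> f g h; apply: lendP => v /=; rewrite linearD. Qed.
Lemma lend1_neq0 : lend1 != 0.
Proof. by apply/eqP => /(congr1 (fun f : lend => f 1)) /eqP; rewrite oner_eq0. Qed.

HB.instance Definition _ := GRing.Zmodule_isNzRing.Build lend
  lend_mulA lend_mul1 lend_mulr1 lend_mulDl lend_mulDr lend1_neq0.

Lemma lend_scaleA a b f : lend_scale a (lend_scale b f) = lend_scale (a * b) f.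
Proof. by apply: lendP => v /=; rewrite scalerA. Qed.
Lemma lend_scale1 : left_id 1 lend_scale.
Proof. by move=> f; apply: lendP => v /=; rewrite scale1r. Qed.
Lemma lend_scaleDr : right_distributive lend_scale +%R.
Proof. by move=> a f g; apply: lendP => v /=; rewrite scalerDr. Qed.
Lemma lend_scaleDl f : {morph lend_scale^~ f : a b / a + b}.
Proof. by move=> a b; apply: lendP => v /=; rewrite scalerDl. Qed.

HB.instance Definition _ := GRing.Zmodule_isLmodule.Build K lend
  lend_scaleA lend_scale1 lend_scaleDr lend_scaleDl.

Lemma lend_scaleAl a (f g : lend) : a *: (f * g) = (a *: f) * g.
Proof. by apply: lendP. Qed.
Lemma lend_scaleAr a (f g : lend) : a *: (f * g) = f * (a *: g).
Proof. by apply: lendP => v /=; rewrite linearZ. Qed.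

HB.instance Definition _ := GRing.Lmodule_isLalgebra.Build K lend lend_scaleAl.
HB.instance Definition _ := GRing.Lalgebra_isAlgebra.Build K lend lend_scaleAr.

End LinearEndomorphisms.

Definition qdetI (K : fieldType) (B : algType K) (x : 'I_2 -> 'I_2 -> B) : B :=
  x i1 i1 * x i2 i2 - x i1 i2 * x i2 i1.

Section MIRelations.
Variables (K : fieldType) (q : K) (B : algType K) (x : 'I_2 -> 'I_2 -> B).
Hypotheses (q_neq0 : q != 0) (HR : MIRel q x).

Let x21x11 : x i2 i1 * x i1 i1 = q ^+ 2 *: (x i1 i1 * x i2 i1).
Proof. by case: HR => _ _ -> _ _; rewrite scalerA mulfV ?scale1r ?expf_neq0. Qed.

Let x22x12 : x i2 i2 * x i1 i2 = q ^+ 2 *: (x i1 i2 * x i2 i2).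
Proof. by case: HR => _ _ _ -> _; rewrite scalerA mulfV ?scale1r ?expf_neq0. Qed.

Let x12x21 : x i1 i2 * x i2 i1 = q ^- 2 *: (x i2 i1 * x i1 i2).
Proof. by case: HR => _ _ _ _ ->; rewrite scalerA mulVf ?scale1r ?expf_neq0. Qed.

Lemma qdetI_alt : qdetI x = x i2 i2 * x i1 i1 - q ^+ 2 *: (x i1 i2 * x i2 i1).
Proof.
by case: HR => _ /eqP det _ _ x21x12; rewrite x21x12 addr_subr_eq0 in det; exact/eqP.
Qed.

Lemma qdetI_x11 : qdetI x * x i1 i1 = x i1 i1 * qdetI x.
Proof.
case: HR => [[x11x12 _] _ _ _ _].
rewrite {2}qdetI_alt /qdetI mulrBl mulrBr -!mulrA x21x11 -scalerAr !mulrA -x11x12.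
by rewrite -scalerAr mulrA.
Qed.

Lemma qdetI_x22 : qdetI x * x i2 i2 = x i2 i2 * qdetI x.
Proof.
case: HR => [[_ x21x22] _ _ x12x22 _].
rewrite {1}qdetI_alt /qdetI mulrBl mulrBr -scalerAl -!mulrA x21x22.
by rewrite [x i1 i2 * (_ * _)]mulrA x12x22 -scalerAl scalerA mulfV ?expf_neq0 // scale1r -mulrA.
Qed.

Lemma qdetI_x12 : qdetI x * x i1 i2 = q ^+ 2 *: (x i1 i2 * qdetI x).
Proof.
case: HR => [[x11x12 _] _ _ _ x21x12].
by rewrite /qdetI mulrBl mulrBr scalerBr -!mulrA x22x12 x21x12 -!scalerAr !mulrA x11x12.
Qed.

Lemma qdetI_x21 : qdetI x * x i2 i1 = q ^- 2 *: (x i2 i1 * qdetI x).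
Proof.
case: HR => [[_ x21x22] _ x11x21 _ _].
by rewrite /qdetI mulrBl mulrBr scalerBr -!mulrA -x21x22 !mulrA x11x21 x12x21 -!scalerAl.
Qed.

End MIRelations.

Section MIRelTransport.
Variables (K : fieldType) (q : K) (A B : algType K) (h : A -> B).
Variable x : 'I_2 -> 'I_2 -> A.
Hypothesis Hh : is_alg_hom h.

Lemma MIRel_hom : MIRel q x -> MIRel q (fun r s => h (x r s)).
Proof.
move=> [[m1 m2] m3 m4 m5 m6].
by split; [split|..]; rewrite -?(alg_homM Hh) -?(alg_homB Hh) -?(alg_homD Hh) -?(alg_homZ Hh)
  ?m1 ?m2 ?m3 ?m4 ?m5 ?m6 ?(alg_hom0 Hh).
Qed.

Lemma MIRel_reflect : injective h -> MIRel q (fun r s => h (x r s)) -> MIRel q x.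
Proof.
move=> h_inj [[m1 m2] m3 m4 m5 m6].
by split; [split|..]; apply: h_inj;
  rewrite ?(alg_homM Hh, alg_homB Hh, alg_homZ Hh, alg_homD Hh, alg_hom0 Hh).
Qed.

End MIRelTransport.

Lemma MIRel_scale (K : fieldType) (q : K) (B : algType K) (x : 'I_2 -> 'I_2 -> B)
    (c : 'I_2 -> K) :
  MIRel q x -> MIRel q (fun r s => c r *: x r s).
Proof.
move=> [[m1 m2] m3 m4 m5 m6].
split; [split|..]; rewrite !scalerMM ?[c i2 * c i1]mulrC.
- by rewrite m1.
- by rewrite m2.
- by rewrite -!scalerBr -scalerDr m3 scaler0.
- by rewrite m4 !scalerA (mulrC (q ^- 2)).
- by rewrite m5 !scalerA (mulrC (q ^- 2)).
- by rewrite m6 !scalerA (mulrC (q ^+ 2)).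
Qed.

Lemma qdetI_hom_scale (K : fieldType) (B : algType K) (x : 'I_2 -> 'I_2 -> B)
    (h : B -> B) (c : 'I_2 -> K) :
  is_alg_hom h -> (forall r s, h (x r s) = c r *: x r s) ->
  h (qdetI x) = (c i1 * c i2) *: qdetI x.
Proof.
move=> Hh hx.
by rewrite /qdetI (alg_homB Hh) !(alg_homM Hh) !hx !scalerMM -scalerBr.
Qed.

Lemma I2_cases (r : 'I_2) : r = i1 \/ r = i2.
Proof. by case: r => [[|[|n]] lt_r2]; [left | right | ]; try apply: val_inj. Qed.

Definition Dcoef (K : fieldType) (p q : K) (r : 'I_2) : K :=
  if r == i1 then p / q else p * q.

Lemma Dcoef_neq0 (K : fieldType) (p q : K) r : p != 0 -> q != 0 -> Dcoef p q r != 0.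
Proof. by move=> p0 q0; rewrite /Dcoef; case: ifP; rewrite mulf_neq0 ?invr_eq0. Qed.

Lemma Dcoef_i1 (K : fieldType) (p q : K) : Dcoef p q i1 = p / q.
Proof. by rewrite /Dcoef eqxx. Qed.

Lemma Dcoef_i2 (K : fieldType) (p q : K) : Dcoef p q i2 = p * q.
Proof. by []. Qed.

Lemma MRel_Dz (K : fieldType) (p q : K) (B : algType K) (z : 'I_2 -> 'I_2 -> B) (D D' : B) :
  MRel p q z D D' -> forall r s, D * z r s = Dcoef p q r *: (z r s * D).
Proof.
by case=> _ _ [Dz11 Dz12 Dz21 Dz22] _ _ r s; case: (I2_cases r) => ->; case: (I2_cases s) => ->.
Qed.

Section LeftMultiplication.
Variables (K : fieldType) (V : algType K).

Definition lmul (u : V) : lend V := lend_of (u \*o idfun).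

Lemma lmul_hom : is_alg_hom lmul.
Proof.
split=> [u v|u v||k u]; apply: lendP => w /=.
- by rewrite mulrDl.
- by rewrite mulrA.
- by rewrite mul1r.
- by rewrite scalerAl.
Qed.

Lemma lmul_inj : injective lmul.
Proof. by move=> u v /(congr1 (fun f : lend V => f 1)) /=; rewrite !mulr1. Qed.

End LeftMultiplication.

Section TwistedModel.
Variables (K : fieldType) (p q : K) (B : algType K) (x : 'I_2 -> 'I_2 -> B) (sigma : B -> B).
Hypotheses (p_neq0 : p != 0) (q_neq0 : q != 0) (HR : MIRel q x).
Hypotheses (Hsigma : is_alg_hom sigma) (sigma_x : forall r s, sigma (x r s) = Dcoef p q r *: x r s).

Definition lsigma : lend B := Lend (alg_hom_linear Hsigma).
Definition twist (u : B) : lend B := lmul u * lsigma.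
Definition twist2 (u : B) : lend B := lmul u * (lsigma * lsigma).

Lemma lsigma_lmul u : lsigma * lmul u = lmul (sigma u) * lsigma.
Proof. by apply: lendP => v /=; rewrite (alg_homM Hsigma). Qed.

Lemma twist_mul u v : twist u * twist v = twist2 (u * sigma v).
Proof.
by rewrite /twist mulrA -(mulrA (lmul u)) lsigma_lmul mulrA -(alg_homM (lmul_hom B)) -mulrA.
Qed.

Lemma lsigma_twist u : lsigma * twist u = twist2 (sigma u).
Proof. by rewrite /twist mulrA lsigma_lmul -mulrA. Qed.

Lemma twist_lsigma u : twist u * lsigma = twist2 u.
Proof. by rewrite -mulrA. Qed.

Lemma twist2Z a u : twist2 (a *: u) = a *: twist2 u.
Proof. by rewrite /twist2 (alg_homZ (lmul_hom B)) scalerAl. Qed.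

Lemma twist2B u v : twist2 (u - v) = twist2 u - twist2 v.
Proof. by rewrite /twist2 (alg_homB (lmul_hom B)) mulrBl. Qed.

Lemma twist_MRel : MRel p q (fun r s => twist (x r s)) lsigma (twist (qdetI x)).
Proof.
have sigma_det : sigma (qdetI x) = p ^+ 2 *: qdetI x.
  by rewrite (qdetI_hom_scale Hsigma sigma_x) Dcoef_i1 Dcoef_i2; congr (_ *: _); field.
have Dcoef21 : Dcoef p q i2 = Dcoef p q i1 * q ^+ 2.
  by rewrite Dcoef_i1 Dcoef_i2; field.
case: (HR) => [[x11x12 x21x22] _ x11x21 x12x22 x21x12].
split; [split | | split | split | split];
  rewrite ?twist_mul ?lsigma_twist ?twist_lsigma ?sigma_x ?sigma_det -?scalerAr.
all: rewrite -?(twist2Z, twist2B); congr (twist2 _).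
- by rewrite x11x12.
- by rewrite x11x21 scalerA Dcoef21 -mulrA mulfV ?mulr1 ?expf_neq0.
- by rewrite x12x22 scalerA Dcoef21 -mulrA mulfV ?mulr1 ?expf_neq0.
- by rewrite x21x22.
- by rewrite x21x12 scalerA Dcoef21.
- have det_alt a : a *: (x i2 i2 * x i1 i1) - (a * q ^+ 2) *: (x i1 i2 * x i2 i1)
      = a *: qdetI x by rewrite -scalerA -scalerBr (qdetI_alt HR).
  rewrite -!scalerBr -/(qdetI x) [in RHS]Dcoef21 det_alt !scalerA.
  by congr (_ *: _); rewrite Dcoef_i1 Dcoef_i2; field.
- rewrite (qdetI_x11 q_neq0 HR) scalerA.
  by congr (_ *: _); rewrite Dcoef_i1; field; rewrite ?q_neq0 ?p_neq0.
- rewrite (qdetI_x12 q_neq0 HR) !scalerA.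
  by congr (_ *: _); rewrite Dcoef_i1; field; rewrite ?q_neq0 ?p_neq0.
- rewrite (qdetI_x21 q_neq0 HR) !scalerA.
  by congr (_ *: _); rewrite Dcoef_i2; field; rewrite ?q_neq0 ?p_neq0.
- rewrite (qdetI_x22 q_neq0 HR) !scalerA.
  by congr (_ *: _); rewrite Dcoef_i2; field; rewrite ?q_neq0 ?p_neq0.
- by rewrite scalerA; congr (_ *: _); field.
- rewrite -scalerBr -/(qdetI x) !scalerA.
  by congr (_ *: _); rewrite Dcoef_i2; field; rewrite ?q_neq0 ?p_neq0.
Qed.

End TwistedModel.

Lemma MRel_scale (K : fieldType) (p q : K) (B : algType K) (z : 'I_2 -> 'I_2 -> B)
    (D D' : B) (c : 'I_2 -> K) :
  MRel p q z D D' ->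
  MRel p q (fun r s => c r *: z r s) D ((c i1 * c i2) *: D').
Proof.
move=> [[z1 z2 z3 z4 z5] det [d1 d2 d3 d4] [e1 e2 e3 e4] [f1 f2]].
split; [split | | split | split | split];
  rewrite ?scalerMM -?scalerAr -?scalerAl ?scalerA ?[c i2 * c i1]mulrC.
- by rewrite z1.
- by rewrite z2.
- by rewrite z3.
- by rewrite z4.
- by rewrite z5.
- by rewrite -!scalerBr !scalerA ![_ * (c i1 * c i2)]mulrC -!scalerA det.
- by rewrite d1 scalerA mulrC.
- by rewrite d2 scalerA mulrC.
- by rewrite d3 scalerA mulrC.
- by rewrite d4 scalerA mulrC.
- by rewrite e1 scalerA; congr (_ *: _); ring.
- by rewrite e2 scalerA; congr (_ *: _); ring.
- by rewrite e3 scalerA; congr (_ *: _); ring.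
- by rewrite e4 scalerA; congr (_ *: _); ring.
- by rewrite ![_ * (c i1 * c i2)]mulrC -!scalerA f1.
- by rewrite -scalerBr !scalerA ![_ * (c i1 * c i2)]mulrC -!scalerA f2.
Qed.

Lemma MIRel_rescaling_automorphism (K : fieldType) (q : K) (B : algType K) (x : 'I_2 -> 'I_2 -> B)
    (c : 'I_2 -> K) :
  is_presentation4 (@MIRel K q) x -> (forall r, c r != 0) ->
  exists sigma sigma' : B -> B,
    [/\ is_alg_hom sigma, is_alg_hom sigma', (forall r s, sigma (x r s) = c r *: x r s),
        cancel sigma sigma' & cancel sigma' sigma].
Proof.
move=> [HR HU] c_neq0.
have [[sigma [Hsigma sigma_x]] _] := HU B _ (MIRel_scale c HR).
have [[sigma' [Hsigma' sigma'_x]] _] := HU B _ (MIRel_scale (fun r => (c r)^-1) HR).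
have [_ uniq] := HU B x HR.
exists sigma, sigma'; split=> // v.
- apply: (uniq (sigma' \o sigma) id (comp_alg_hom Hsigma Hsigma') (@id_alg_hom _ _)) => r s /=.
  by rewrite sigma_x (alg_homZ Hsigma') sigma'_x scalerA mulfV ?scale1r.
- apply: (uniq (sigma \o sigma') id (comp_alg_hom Hsigma' Hsigma) (@id_alg_hom _ _)) => r s /=.
  by rewrite sigma'_x (alg_homZ Hsigma) sigma_x scalerA mulVf ?scale1r.
Qed.

Lemma MIRel_embeds_in_MRel (K : fieldType) (p q : K) (c : 'I_2 -> K)
    (B : algType K) (x : 'I_2 -> 'I_2 -> B) :
  p != 0 -> q != 0 -> (forall r, c r != 0) -> is_presentation4 (@MIRel K q) x ->
  exists (C : algType K) (z : 'I_2 -> 'I_2 -> C) (D D' Dinv : C) (h : B -> C),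
    [/\ MRel p q z D D', D * Dinv = 1, Dinv * D = 1, is_alg_hom h /\ injective h &
        forall r s, h (x r s) = c r *: (z r s * Dinv)].
Proof.
move=> p_neq0 q_neq0 c_neq0 HI.
have [sigma [sigma' [Hsigma Hsigma' sigma_x sigmaK sigma'K]]] :=
  MIRel_rescaling_automorphism HI (fun r => Dcoef_neq0 r p_neq0 q_neq0).
pose lsigma' : lend B := Lend (alg_hom_linear Hsigma').
exists (lend B), (fun r s => (c r)^-1 *: twist Hsigma (x r s)), (lsigma Hsigma),
  (((c i1)^-1 * (c i2)^-1) *: twist Hsigma (qdetI x)), lsigma', (@lmul K B).
split.
- exact: (MRel_scale (fun r => (c r)^-1) (twist_MRel p_neq0 q_neq0 HI.1 Hsigma sigma_x)).
- by apply: lendP => v /=; rewrite sigma'K.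
- by apply: lendP => v /=; rewrite sigmaK.
- exact: conj (lmul_hom B) (@lmul_inj K B).
- move=> r s; apply: lendP => v /=.
  by rewrite sigma'K scalerA mulfV ?scale1r.
Qed.

Section LocalizedRelations.
Variables (K : fieldType) (p q : K) (L : algType K) (Z : 'I_2 -> 'I_2 -> L) (E E' Einv : L).
Hypotheses (p_neq0 : p != 0) (q_neq0 : q != 0) (HM : MRel p q Z E E').
Hypotheses (E_Einv : E * Einv = 1) (Einv_E : Einv * E = 1).

Local Notation Y r s := (Z r s * Einv).

Lemma Einv_Z r s : Einv * Z r s = (Dcoef p q r)^-1 *: Y r s.
Proof. exact: inv_commute E_Einv Einv_E (Dcoef_neq0 r p_neq0 q_neq0) (MRel_Dz HM r s). Qed.

Lemma mulY r s r' s' :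
  Y r s * Y r' s' = (Dcoef p q r')^-1 *: (Z r s * Z r' s' * (Einv * Einv)).
Proof. by rewrite mulrA -(mulrA (Z r s)) Einv_Z -scalerAr -scalerAl !mulrA. Qed.

Lemma Y_MIRel : MIRel q (fun r s => Y r s).
Proof.
case: HM => [[z11z12 z11z21 z12z22 z21z22 z12z21] det _ _ _].
have Dcoef12 : (Dcoef p q i2)^-1 = q ^- 2 * (Dcoef p q i1)^-1.
  by rewrite Dcoef_i1 Dcoef_i2; field; rewrite ?p_neq0 ?q_neq0.
have det' : q ^- 2 *: qdetI Z = Z i2 i2 * Z i1 i1 - Z i1 i2 * Z i2 i1.
  by rewrite -exprVn expr2 -scalerA det scalerA mulVf ?scale1r.
split; [split|..]; rewrite !mulY.
- by rewrite z11z12.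
- by rewrite z21z22.
- apply/eqP; rewrite -z12z21 addr_subr_eq0 -!scalerBr -!mulrBl !scalerAl.
  by rewrite Dcoef12 mulrC -scalerA det'.
- by rewrite z11z21 Dcoef12 scalerA.
- by rewrite z12z22 Dcoef12 scalerA.
- by rewrite z12z21 Dcoef12 scalerA [q ^+ 2 * _]mulrA mulfV ?mul1r // expf_neq0.
Qed.

Lemma E'_Einv_qdet : E' * Einv = qdetI (fun r s => Y r s).
Proof.
rewrite [RHS]/qdetI.
have EE' : E * E' = (p / q) *: qdetI Z.
  by case: HM => _ _ _ _ [_ det]; rewrite -[LHS]scale1r -(mulfV p_neq0) -[LHS]scalerA -det scalerA.
have -> : E' * Einv = Einv * (E * E') * Einv by rewrite (mulrA Einv) Einv_E mul1r.
rewrite EE' -scalerAr -scalerAl /qdetI mulrBr mulrBl !mulrA !Einv_Z -!scalerAl -scalerBr.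
by rewrite scalerA Dcoef_i1 mulfV ?scale1r ?mulf_neq0 ?invr_eq0 // -!mulrA.
Qed.

Lemma E_E'_commute : E * E' = p ^+ 2 *: (E' * E).
Proof.
by case: HM => _ _ _ _ [EE' _]; rewrite -[LHS]scale1r -(mulfV p_neq0) -[LHS]scalerA EE' scalerA.
Qed.

End LocalizedRelations.

Lemma alg_hom_image_closed (K : fieldType) (A L : algType K) (f : A -> L) :
  is_alg_hom f -> subalg_closed [pred u | `[< exists v, u = f v >]].
Proof.
move=> Hf; split=> [|a u v|u v]; rewrite !inE.
- by apply/asboolP; exists 1; rewrite (alg_hom1 Hf).
- move=> /asboolP[u' ->] /asboolP[v' ->]; apply/asboolP.
  by exists (a *: u' + v'); rewrite (alg_homD Hf) (alg_homZ Hf).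
- move=> /asboolP[u' ->] /asboolP[v' ->]; apply/asboolP.
  by exists (u' * v'); rewrite (alg_homM Hf).
Qed.

Section DegreeZero.
Variables (K : fieldType) (L : algType K) (I : eqType) (G : I -> L) (wt : I -> int).

Definition deg0 (u : L) : Prop :=
  exists ws : seq (K * seq I),
    all (fun t => \sum_(i <- t.2) wt i == 0) ws /\
    u = \sum_(t <- ws) t.1 *: \prod_(i <- t.2) G i.

Lemma deg0_word (k : K) (w : seq I) :
  \sum_(i <- w) wt i = 0 -> deg0 (k *: \prod_(i <- w) G i).
Proof. by move=> w0; exists [:: (k, w)]; rewrite /= w0 big_seq1. Qed.

Lemma deg0_closed : subalg_closed [pred u | `[< deg0 u >]].
Proof.
split=> [|a u v|u v]; rewrite !inE.
- by apply/asboolP; have := deg0_word 1 (big_nil _ _ _ _); rewrite big_nil scale1r.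
- move=> /asboolP[wu [wu0 ->]] /asboolP[wv [wv0 ->]]; apply/asboolP.
  exists ([seq (a * t.1, t.2) | t <- wu] ++ wv).
  rewrite all_cat all_map wv0 andbT big_cat big_map scaler_sumr; split=> //.
  by congr (_ + _); apply: eq_bigr => t _; rewrite scalerA.
- move=> /asboolP[wu [wu0 ->]] /asboolP[wv [wv0 ->]]; apply/asboolP.
  exists [seq (t.1 * t'.1, t.2 ++ t'.2) | t <- wu, t' <- wv]; split.
    apply/all_allpairsP => t t' t_wu t'_wv /=.
    by rewrite big_cat (eqP (allP wu0 t t_wu)) (eqP (allP wv0 t' t'_wv)).
  rewrite big_allpairs_dep mulr_suml; apply: eq_bigr => t _.
  by rewrite mulr_sumr; apply: eq_bigr => t' _ /=; rewrite scalerMM big_cat.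
Qed.

End DegreeZero.

Section IntegerPowers.
Variables (K : fieldType) (L : algType K) (E Einv : L).
Hypotheses (E_Einv : E * Einv = 1) (Einv_E : Einv * E = 1).

Definition zpow (n : int) : L :=
  match n with Posz k => E ^+ k | Negz k => Einv ^+ k.+1 end.

Lemma zpowS n : E * zpow n = zpow (n + 1).
Proof.
case: n => [k|[|k]].
- have -> : Posz k + 1 = Posz k.+1 by lia.
  by rewrite /= exprS.
- by rewrite /= expr1 E_Einv.
- have -> : Negz k.+1 + 1 = Negz k by rewrite !NegzE; lia.
  by rewrite /= exprS mulrA E_Einv mul1r.
Qed.

Lemma zpow_mulEinv n : zpow n * Einv = zpow (n - 1).
Proof.
case: n => [[|k]|k].
- by rewrite /= mul1r expr1.
- have -> : Posz k.+1 - 1 = Posz k by lia.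
  by rewrite /= exprSr -mulrA E_Einv mulr1.
- have -> : Negz k - 1 = Negz k.+1 by rewrite !NegzE; lia.
  by rewrite /= [in RHS]exprSr.
Qed.

Lemma zpow_commute (g : L) (a : K) : a != 0 -> E * g = a *: (g * E) ->
  forall n, exists b : K, zpow n * g = b *: (g * zpow n).
Proof.
move=> a_neq0 Eg [k|k] /=; first by exists (a ^+ k); apply: exprZ_commute.
by exists (a^-1 ^+ k.+1); apply: exprZ_commute; exact: inv_commute E_Einv Einv_E a_neq0 Eg.
Qed.

End IntegerPowers.

Section Degree0Subalgebra.
Variables (K : fieldType) (L : algType K) (E Einv : L) (P : {pred L}).
Hypotheses (E_Einv : E * Einv = 1) (Einv_E : Einv * E = 1) (P_closed : subalg_closed P).

HB.instance Definition _ := GRing.isSubalgClosed.Build K L P (GRing.subalg_closed_semi P_closed).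

Variables (I : eqType) (G : I -> L) (wt : I -> int).
Hypothesis G_spec : forall i, (G i = Einv /\ wt i = -1) \/
  [/\ wt i = 1, exists2 a : K, a != 0 & E * G i = a *: (G i * E) & G i * Einv \in P].

Lemma prod_zpow (w : seq I) :
  exists2 u, u \in P & \prod_(i <- w) G i = u * zpow E Einv (\sum_(i <- w) wt i).
Proof.
elim/last_ind: w => [|w i [u Pu IHw]]; first by exists 1; rewrite ?rpred1 // !big_nil mul1r.
rewrite -cats1 !big_cat !big_seq1 /= IHw.
case: (G_spec i) => [[-> ->]|[-> [a a_neq0 EG] PGi]].
  by exists u => //; rewrite -mulrA zpow_mulEinv.
have [b Hb] := zpow_commute E_Einv Einv_E a_neq0 EG (\sum_(j <- w) wt j).
exists (b *: (u * (G i * Einv))); first by apply/rpredZ/rpredM.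
rewrite -mulrA Hb -(zpowS E_Einv) -scalerAr -scalerAl -!mulrA.
by rewrite (mulrA Einv) Einv_E mul1r.
Qed.

Lemma deg0_subalg u : deg0 G wt u -> u \in P.
Proof.
case=> ws [+ ->]; elim: ws => [|t ws IHws] /=; first by rewrite big_nil rpred0.
case/andP=> /eqP t0 ws0; rewrite big_cons rpredD ?IHws // rpredZ //.
by have [v Pv ->] := prod_zpow t.2; rewrite t0 mulr1.
Qed.

End Degree0Subalgebra.

Lemma MRel_hom (K : fieldType) (A B : algType K) (h : A -> B) (p q : K)
    (z : 'I_2 -> 'I_2 -> A) (D D' : A) :
  is_alg_hom h -> MRel p q z D D' -> MRel p q (fun r s => h (z r s)) (h D) (h D').
Proof.
move=> Hh [[z1 z2 z3 z4 z5] det [d1 d2 d3 d4] [e1 e2 e3 e4] [f1 f2]].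
by split; [split | | split | split | split];
  rewrite -?(alg_homM Hh) -?(alg_homB Hh) -?(alg_homZ Hh); congr h.
Qed.

Section LocalizationDegree0.
Variables (K : fieldType) (p q : K) (c : 'I_2 -> K).
Hypotheses (p_neq0 : p != 0) (q_neq0 : q != 0) (c_neq0 : forall r, c r != 0).
Variables (A : algType K) (z : 'I_2 -> 'I_2 -> A) (D D' : A).
Hypothesis HA : is_M_presentation p q z D D'.
Variables (AI : algType K) (x : 'I_2 -> 'I_2 -> AI).
Hypothesis HI : is_presentation4 (@MIRel K q) x.
Variables (L : algType K) (iota : A -> L) (Dinv : L).
Hypothesis HL : is_localization D iota Dinv.

Local Notation Y r s := (iota (z r s) * Dinv).

Let Hiota : is_alg_hom iota. Proof. by case: HL. Qed.
Let D_Dinv : iota D * Dinv = 1. Proof. by case: HL. Qed.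
Let Dinv_D : Dinv * iota D = 1. Proof. by case: HL. Qed.
Let HML : MRel p q (fun r s => iota (z r s)) (iota D) (iota D').
Proof. exact: MRel_hom Hiota HA.1. Qed.

Lemma X_MIRel : MIRel q (fun r s => c r *: Y r s).
Proof. exact/MIRel_scale/(Y_MIRel p_neq0 q_neq0 HML D_Dinv Dinv_D). Qed.

Variable f : AI -> L.
Hypotheses (Hf : is_alg_hom f) (fx : forall r s, f (x r s) = c r *: Y r s).

Lemma loc_hom_inj : injective f.
Proof.
have [B [zB [DB [D'B [DBinv [h [HMB DB_DBinv DBinv_DB [Hh h_inj] hx]]]]]]] :=
  MIRel_embeds_in_MRel p_neq0 q_neq0 c_neq0 HI.
have [[g [Hg [gz [gD _]]]] _] := HA.2 B zB DB D'B HMB.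
have [_ _ _ HLU] := HL.
rewrite -gD in DB_DBinv DBinv_DB.
have [[k [Hk k_iota]] _] := HLU B g DBinv Hg DB_DBinv DBinv_DB.
have kDinv : k Dinv = DBinv.
  by rewrite -[k Dinv]mulr1 -DB_DBinv -k_iota mulrA -(alg_homM Hk) Dinv_D (alg_hom1 Hk) mul1r.
have [_ uniq] := HI.2 B _ (MIRel_hom Hh HI.1).
have kf : k \o f =1 h.
  apply: uniq => [||r s]; [exact: comp_alg_hom Hf Hk | exact: Hh |].
  by rewrite /= fx (alg_homZ Hk) (alg_homM Hk) k_iota kDinv gz hx.
by move=> u v fuv; apply: h_inj; rewrite -kf -[h v]kf /= fuv.
Qed.

Lemma loc_gen_z r s :
  exists2 j, loc_gen z D D' iota Dinv j = iota (z r s) & loc_wt j = 1.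
Proof.
by case: (I2_cases r) => ->; case: (I2_cases s) => ->;
  [exists (@Ordinal 7 0 isT) | exists (@Ordinal 7 1 isT)
  | exists (@Ordinal 7 2 isT) | exists (@Ordinal 7 3 isT)].
Qed.

Lemma loc_hom_deg0 v : loc_deg0 z D D' iota Dinv (f v).
Proof.
suff /(_ v) : forall v, f v \in [pred u | `[< loc_deg0 z D D' iota Dinv u >]].
  by rewrite inE => /asboolP.
apply: (presentation4_hom_subalg (deg0_closed _ _) (@MIRel_reflect K q) HI Hf).
  by under eq_fun2 do rewrite fx; exact: X_MIRel.
move=> r s; rewrite fx inE; apply/asboolP.
have [j zj wj] := loc_gen_z r s.
have := @deg0_word K L _ (loc_gen z D D' iota Dinv) loc_wt (c r) [:: j; @Ordinal 7 6 isT].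
by rewrite !big_cons !big_nil wj mulr1 zj; apply.
Qed.

Let imf := [pred u | `[< exists v, u = f v >]].

Let imfP v : f v \in imf.
Proof. by rewrite inE; apply/asboolP; exists v. Qed.

Let imf_closed : subalg_closed imf.
Proof. exact: alg_hom_image_closed. Qed.

HB.instance Definition _ :=
  GRing.isSubalgClosed.Build K L imf (GRing.subalg_closed_semi imf_closed).

Let Y_imf r s : Y r s \in imf.
Proof. by rewrite -[Y r s]scale1r -(mulVf (c_neq0 r)) -scalerA -fx -(alg_homZ Hf) imfP. Qed.

Lemma loc_deg0_image u : loc_deg0 z D D' iota Dinv u -> exists v, u = f v.
Proof.
move=> u_deg0; suff : u \in imf by rewrite inE => /asboolP.
apply: (deg0_subalg D_Dinv Dinv_D imf_closed _ u_deg0).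
case=> [[|[|[|[|[|[|[|i]]]]]]] lt_i7] //=; [right .. | by left].
- split=> //; last exact: Y_imf.
  by exists (Dcoef p q i1); [exact: Dcoef_neq0 | exact: MRel_Dz HML i1 i1].
- split=> //; last exact: Y_imf.
  by exists (Dcoef p q i1); [exact: Dcoef_neq0 | exact: MRel_Dz HML i1 i2].
- split=> //; last exact: Y_imf.
  by exists (Dcoef p q i2); [exact: Dcoef_neq0 | exact: MRel_Dz HML i2 i1].
- split=> //; last exact: Y_imf.
  by exists (Dcoef p q i2); [exact: Dcoef_neq0 | exact: MRel_Dz HML i2 i2].
- by split=> //; [exists 1; rewrite ?oner_eq0 ?scale1r | rewrite D_Dinv rpred1].
- split=> //; first by exists (p ^+ 2); [rewrite expf_neq0 | exact: E_E'_commute p_neq0 HML].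
  change (iota D' * Dinv \in imf).
  by rewrite (E'_Einv_qdet p_neq0 q_neq0 HML D_Dinv Dinv_D); apply: rpredB; apply: rpredM.
Qed.

End LocalizationDegree0.

Theorem localization_deg0_iso (K : fieldType) (p q : K) (c : 'I_2 -> K)
    (A : algType K) (z : 'I_2 -> 'I_2 -> A) (D D' : A)
    (AI : algType K) (x : 'I_2 -> 'I_2 -> AI) (L : algType K) (iota : A -> L) (Dinv : L) :
  p != 0 -> q != 0 -> (forall r, c r != 0) ->
  is_M_presentation p q z D D' -> is_presentation4 (@MIRel K q) x ->
  is_localization D iota Dinv ->
  exists f : AI -> L,
    [/\ is_alg_hom f, injective f,
        (forall r s, f (x r s) = c r *: (iota (z r s) * Dinv)) &
        (forall u, loc_deg0 z D D' iota Dinv u <-> exists v, u = f v)].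
Proof.
move=> p_neq0 q_neq0 c_neq0 HA HI HL.
have [[f [Hf fx]] _] := HI.2 L _ (X_MIRel c p_neq0 q_neq0 HA HL).
exists f; split=> //.
- exact: (loc_hom_inj p_neq0 q_neq0 c_neq0 HA HI HL Hf fx).
- move=> u; split; first exact: (loc_deg0_image p_neq0 q_neq0 c_neq0 HA HL Hf fx (u := u)).
  by case=> v ->; exact (loc_hom_deg0 p_neq0 q_neq0 HA HI HL Hf fx v).
Qed.

Lemma MRel_transpose (K : fieldType) (p q : K) (B : algType K) (z : 'I_2 -> 'I_2 -> B)
    (D D' : B) :
  MRel p q z D D' -> MRel p^-1 q (fun r s => z s r) D' D.
Proof.
move=> [[z1 z2 z3 z4 z5] det [d1 d2 d3 d4] [e1 e2 e3 e4] [f1 f2]].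
split; [split | | split | split | split]; rewrite ?invrK //.
- by rewrite -z5.
- by rewrite -z5 f2 f1.
Qed.

Lemma M_presentation_transpose (K : fieldType) (p q : K) (A : algType K)
    (z : 'I_2 -> 'I_2 -> A) (D D' : A) :
  is_M_presentation p q z D D' -> is_M_presentation p^-1 q (fun r s => z s r) D' D.
Proof.
case=> HM HU; split=> [|B zB DB D'B HB]; first exact: MRel_transpose.
have /HU[[f [Hf [fz [fD fD']]]] uniq] : MRel p q (fun r s => zB s r) D'B DB.
  by have := MRel_transpose HB; rewrite invrK.
split; first by exists f.
by move=> g h Hg Hh ghz ghD' ghD; apply: uniq => // r s; exact: ghz.
Qed.

Lemma MJ_presentation_transpose (K : fieldType) (q : K) (AJ : algType K)
    (y : 'I_2 -> 'I_2 -> AJ) :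
  is_presentation4 (@MJRel K q) y -> is_presentation4 (@MIRel K q) (fun r s => y s r).
Proof.
case=> HR HU; split=> [|B xB HB]; first exact: HR.
have [[f [Hf fy]] uniq] := HU B (fun r s => xB s r) HB.
split; first by exists f.
by move=> g h Hg Hh ghy; apply: uniq => // r s; exact: ghy.
Qed.

Definition transpose_gen (i : 'I_7) : 'I_7 :=
  match val i with
  | 1 => @Ordinal 7 2 isT
  | 2 => @Ordinal 7 1 isT
  | 4 => @Ordinal 7 5 isT
  | 5 => @Ordinal 7 4 isT
  | _ => i
  end.

Lemma deg0_reindex (K : fieldType) (L : algType K) (I : eqType) (G G' : I -> L)
    (wt : I -> int) (pi : I -> I) u :
  (forall i, G' (pi i) = G i) -> (forall i, wt (pi i) = wt i) ->
  deg0 G wt u -> deg0 G' wt u.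
Proof.
move=> G'pi wtpi [ws [ws0 ->]]; exists [seq (t.1, map pi t.2) | t <- ws]; split.
  rewrite all_map; apply: sub_all ws0 => t /=.
  by rewrite big_map (eq_bigr _ (fun i _ => wtpi i)).
rewrite big_map; apply: eq_bigr => t _ /=.
by rewrite big_map (eq_bigr _ (fun i _ => G'pi i)).
Qed.

Lemma loc_deg0_transpose (K : fieldType) (A L : algType K) (z : 'I_2 -> 'I_2 -> A)
    (D D' : A) (iota : A -> L) (dinv u : L) :
  loc_deg0 (fun r s => z s r) D' D iota dinv u <-> loc_deg0 z D D' iota dinv u.
Proof.
change (deg0 (loc_gen (fun r s => z s r) D' D iota dinv) loc_wt u <->
        deg0 (loc_gen z D D' iota dinv) loc_wt u).
by split; apply: (deg0_reindex (pi := transpose_gen)); case=> [[|[|[|[|[|[|[|i]]]]]]] lt_i7].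
Qed.

Lemma sqrtcD_neq0 (p q : Kq) r s : q != 0 -> sqrtcD p q r s != 0.
Proof.
by move=> q_neq0; rewrite /sqrtcD; case: (p == q); case: (r == i1); rewrite ?oner_eq0 ?invr_eq0.
Qed.

Lemma sqrtcD'_neq0 (p q : Kq) r s : q != 0 -> sqrtcD' p q r s != 0.
Proof.
by move=> q_neq0; rewrite /sqrtcD'; case: (p == q); case: (s == i1); rewrite ?oner_eq0 ?invr_eq0.
Qed.

Unset Implicit Arguments.

Theorem proposition4p2
  (p : Kq) (hp : p = qpar \/ p = qpar^-1)
  (A : algType Kq) (z : 'I_2 -> 'I_2 -> A) (D D' : A)
  (HA : is_M_presentation p qpar z D D')
  (AI : algType Kq) (x : 'I_2 -> 'I_2 -> AI)
  (HI : is_presentation4 (@MIRel Kq qpar) x)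
  (AJ : algType Kq) (y : 'I_2 -> 'I_2 -> AJ)
  (HJ : is_presentation4 (@MJRel Kq qpar) y)
  (L : algType Kq) (iota : A -> L) (Dinv : L)
  (HL : is_localization D iota Dinv)
  (L' : algType Kq) (iota' : A -> L') (D'inv : L')
  (HL' : is_localization D' iota' D'inv) :
  (exists f : AI -> L,
     [/\ is_alg_hom f, injective f,
         (forall r s, f (x r s) = sqrtcD p qpar r s *: (iota (z r s) * Dinv)) &
         (forall u : L, loc_deg0 z D D' iota Dinv u <-> exists v, u = f v)])
  /\
  (exists g : AJ -> L',
     [/\ is_alg_hom g, injective g,
         (forall r s, g (y r s) = sqrtcD' p qpar r s *: (iota' (z r s) * D'inv)) &
         (forall u : L', loc_deg0 z D D' iota' D'inv u <-> exists v, u = g v)]).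
Proof.
have q_neq0 : qpar != 0 by rewrite tofrac_eq0 polyX_eq0.
have p_neq0 : p != 0 by case: hp => ->; rewrite ?invr_eq0.
(* [sqrtcD p q r s] depends only on [r], and [sqrtcD' p q r s] only on [s]. *)
split.
  exact: localization_deg0_iso p_neq0 q_neq0 (fun r => sqrtcD_neq0 p r i1 q_neq0) HA HI HL.
have [g [Hg g_inj gy g_deg0]] := localization_deg0_iso (invr_neq0 p_neq0) q_neq0
  (fun s => sqrtcD'_neq0 p i1 s q_neq0) (M_presentation_transpose HA)
  (MJ_presentation_transpose HJ) HL'.
exists g; split=> // u.
by rewrite -loc_deg0_transpose g_deg0.
Qed.
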